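(* Let $e\geqslant 1$ be an integer and $b\geqslant 2$ an even integer. Assume that for every integer $a$ there exists an $(e,b)$-happy number $h$ with $h\equiv a\pmod{b-1}$. Then for every integer $a$ there exists an $(e,b)$-happy number $h'$ with $h'\equiv a\pmod{(b-1)^e}$.
   Context: For a positive integer $n=\sum_{j=0}^k a_j b^j$ with $0\leqslant a_j<b$, $T_{e,b}(n)=\sum_{j=0}^k a_j^e$; $T_{e,b}^r$ is the $r$-th iterate, $T_{e,b}^0(n)=n$. A positive integer $n$ is $(e,b)$-happy if $T_{e,b}^r(n)=1$ for some $r\geqslant 0$. *)

From mathcomp Require Import all_boot all_order all_algebra.
Set Implicit Arguments. Unset Strict Implicit. Unset Printing Implicit Defensive.

(* Sum of e-th powers of the base-b digits of n, computed with fuel.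
   With fuel >= n (and b >= 2) the full expansion is processed. *)
Fixpoint digit_pow_sum_fuel (fuel e b n : nat) : nat :=
  match fuel with
  | 0 => 0
  | fuel'.+1 =>
      if n == 0 then 0
      else (n %% b) ^ e + digit_pow_sum_fuel fuel' e b (n %/ b)
  end.

Definition T (e b n : nat) : nat := digit_pow_sum_fuel n e b n.

Definition happy (e b n : nat) : Prop :=
  0 < n /\ exists r : nat, iter r (T e b) n = 1.

(* Pick a happy h with h = c (mod b-1) and replace it by K = h * b^M: trailing
   zeros do not change T, so K is still happy, still congruent to c modulo b-1
   (as b = 1 mod b-1), and K > M.  As b is coprime to M, some k >= 2 has
   b^k = 1 (mod M).  Starting from 0, append K - r blocks of k digits ending in
   1 and then r blocks ending in 10: the result N has T N = K, so N is happy,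
   and N = (K - r) + r b = K + r (b-1) (mod M).  Since b-1 divides M, some
   r < M makes this c. *)

From mathcomp Require Import all_boot all_order all_algebra.
From mathcomp Require Import cyclic zify.

Set Implicit Arguments.
Unset Strict Implicit.
Unset Printing Implicit Defensive.

Section DigitPowerSum.

Variables (e b : nat).
Hypotheses (e_gt0 : 0 < e) (b_gt1 : 1 < b).

Lemma digit_pow_sum_fuelE fuel n : n <= fuel -> digit_pow_sum_fuel fuel e b n = T e b n.
Proof.
move=> le_n_fuel; rewrite /T.
suff fuel_indep f g m : m <= f -> m <= g ->
    digit_pow_sum_fuel f e b m = digit_pow_sum_fuel g e b m by apply: fuel_indep.
elim: f g m => [|f IH] [|g] [|m] //= le_m_f le_m_g.
have lt_div : m.+1 %/ b < m.+1 by rewrite ltn_Pdiv.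
by rewrite (IH g) //; lia.
Qed.

Lemma T_digit n d : d < b -> T e b (n * b + d) = T e b n + d ^ e.
Proof.
move=> lt_d_b; have [nbd0 | nbd_gt0] := posnP (n * b + d).
  have [-> ->] : n = 0 /\ d = 0 by lia.
  by rewrite exp0n.
rewrite {1}/T; case E: (n * b + d) nbd_gt0 => [//|N] _ /=; rewrite -E.
rewrite modnMDl modn_small // divnMDl ?divn_small ?addn0 ?(ltnW b_gt1) // addnC.
by congr (_ + _); apply: digit_pow_sum_fuelE; case: n E => //= n; nia.
Qed.

Lemma T1 : T e b 1 = 1.
Proof. by have := @T_digit 0 1 b_gt1; rewrite exp1n. Qed.

Lemma T_mul_exp n j : T e b (n * b ^ j) = T e b n.
Proof.
elim: j => [|j IH]; first by rewrite muln1.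
by rewrite expnSr mulnA -[_ * b]addn0 T_digit ?exp0n ?addn0 // ltnW.
Qed.

Lemma T_mul_expD n k d j : d < b -> j < k ->
  T e b (n * b ^ k + d * b ^ j) = T e b n + d ^ e.
Proof.
move=> lt_d_b lt_j_k.
have -> : n * b ^ k + d * b ^ j = (n * b ^ (k - j.+1) * b + d) * b ^ j.
  by rewrite mulnDl -!mulnA -expnS -expnD subnK.
by rewrite T_mul_exp T_digit // T_mul_exp.
Qed.

Lemma happy_of_T n : 0 < n -> happy e b (T e b n) -> happy e b n.
Proof. by move=> n_gt0 [_ [r Tr]]; split => //; exists r.+1; rewrite iterSr. Qed.

Lemma happy_T_eq m n : 0 < m -> T e b m = T e b n -> happy e b n -> happy e b m.
Proof.
move=> m_gt0 eq_T [_ [r Tr]]; split => //; exists r.+1.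
by rewrite iterSr eq_T -iterSr iterS Tr T1.
Qed.

End DigitPowerSum.

Section BlockConstruction.

Variables (e b k : nat).
Hypotheses (e_gt0 : 0 < e) (b_gt1 : 1 < b).

Definition append_block j n := n * b ^ k + b ^ j.

Lemma T_append_block j n : j < k -> T e b (append_block j n) = T e b n + 1.
Proof. by move=> lt_j_k; rewrite /append_block -[b ^ j]mul1n T_mul_expD ?exp1n. Qed.

Lemma T_iter_append_block j s n : j < k ->
  T e b (iter s (append_block j) n) = T e b n + s.
Proof.
move=> lt_j_k; elim: s => [|s IH] /=; first by rewrite addn0.
by rewrite T_append_block // IH addn1 addnS.
Qed.

Variable M : nat.
Hypothesis expb_k_mod : b ^ k = 1 %[mod M].

Lemma append_block_mod j n : append_block j n = n + b ^ j %[mod M].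
Proof. by rewrite /append_block -modnDml -modnMmr expb_k_mod modnMmr muln1 modnDml. Qed.

Lemma iter_append_block_mod j s n :
  iter s (append_block j) n = n + s * b ^ j %[mod M].
Proof.
elim: s => [|s IH] /=; first by rewrite addn0.
by rewrite append_block_mod -modnDml IH modnDml mulSnr addnA.
Qed.

Lemma exists_T_eq_mod K r : 1 < k -> r <= K ->
  exists N, T e b N = K /\ N = K + r * b.-1 %[mod M].
Proof.
move=> k_gt1 le_r_K.
exists (iter r (append_block 1) (iter (K - r) (append_block 0) 0)); split.
  by rewrite !T_iter_append_block ?(ltnW k_gt1) // add0n subnK.
rewrite iter_append_block_mod -modnDml iter_append_block_mod modnDml.
by rewrite add0n expn0 muln1 expn1 -{1}(prednK (ltnW b_gt1)) mulnS addnA subnK.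
Qed.

End BlockConstruction.

Lemma exists_mul_residue m M K c : 0 < M -> m %| M -> K = c %[mod m] ->
  exists2 r, r < M & K + r * m = c %[mod M].
Proof.
move=> M_gt0 dvd_m_M eq_K_c.
(* d is (c - K) mod M, written without truncated subtraction. *)
set d := (c + K * M.-1) %% M.
have dvd_m_d : m %| d.
  rewrite /d /dvdn (modn_dvdm _ dvd_m_M) -modnDml -eq_K_c modnDml.
  by rewrite -{1}[K]muln1 -mulnDr add1n prednK //; apply: dvdn_mull.
exists (d %/ m).
  by rewrite (leq_ltn_trans (leq_div _ _)) // ltn_pmod.
rewrite divnK // /d modnDmr addnCA -{1}[K]muln1 -mulnDr add1n prednK //.
by rewrite -modnDmr modnMl addn0.
Qed.

Lemma exists_exp_mod1 b M : coprime b M -> exists2 k, 1 < k & b ^ k = 1 %[mod M].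
Proof.
move=> cop_bM; have [M0 | M_gt0] := posnP M.
  by exists 2 => //; move: cop_bM; rewrite M0 /coprime gcdn0 => /eqP ->.
exists (totient M).*2; first by move: M_gt0; rewrite -totient_gt0 -addnn; lia.
by rewrite -addnn expnD -modnMm Euler_exp_totient // modnMm.
Qed.

Theorem happy_residues_lift e b M : 0 < e -> 1 < b -> b.-1 %| M -> coprime b M ->
  (forall c, exists h, happy e b h /\ h = c %[mod b.-1]) ->
  forall c, exists h, happy e b h /\ h = c %[mod M].
Proof.
move=> e_gt0 b_gt1 dvd_M cop_bM happy_mod c.
have M_gt0 : 0 < M.
  by case: M cop_bM {dvd_M} => //; rewrite /coprime gcdn0 => /eqP b1; lia.
have [k k_gt1 expb_k] := exists_exp_mod1 cop_bM.
have [h [happy_h h_c]] := happy_mod c.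
have h_gt0 : 0 < h by case: happy_h.
set K := h * b ^ M.
have happy_K : happy e b K.
  apply: (happy_T_eq e_gt0 b_gt1 _ _ happy_h); last exact: T_mul_exp.
  by rewrite muln_gt0 h_gt0 expn_gt0 ltnW.
have lt_M_K : M < K by rewrite (leq_trans (ltn_expl _ b_gt1)) // leq_pmull.
have K_c : K = c %[mod b.-1].
  rewrite -h_c /K -modnMmr -modnXm -{1}(prednK (ltnW b_gt1)) -addn1 modnDl.
  by rewrite modnXm exp1n modnMmr muln1.
have [r lt_r_M r_c] := exists_mul_residue M_gt0 dvd_M K_c.
have le_r_K : r <= K by rewrite ltnW // (ltn_trans lt_r_M).
have [N [TN N_K]] := exists_T_eq_mod e_gt0 b_gt1 expb_k k_gt1 le_r_K.
have N_gt0 : 0 < N by case: N TN {N_K} => // TN; move: lt_M_K; rewrite -TN.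
by exists N; split; [apply: happy_of_T; rewrite ?TN | rewrite N_K].
Qed.

Lemma eqz_mod_nat h c d : (h%:Z = c%:Z %[mod d%:Z])%Z <-> h = c %[mod d].
Proof. by rewrite !modz_nat; split => [[]|->]. Qed.

Lemma exists_nat_residue (a : int) d : 0 < d -> exists c : nat, (c%:Z = a %[mod d%:Z])%Z.
Proof.
move=> d_gt0; have ge0 : (0 <= (a %% d%:Z)%Z)%R by rewrite modz_ge0 // eqz_nat -lt0n.
by exists `|(a %% d%:Z)%Z|%N; rewrite gez0_abs // modz_mod.
Qed.

Theorem corollary2p2 (e b : nat) :
  1 <= e -> 2 <= b -> ~~ odd b ->
  (forall a : int, exists h : nat,
      happy e b h /\ (h%:Z = a %[mod (b.-1)%:Z])%Z) ->
  forall a : int, exists h' : nat,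
      happy e b h' /\ (h'%:Z = a %[mod ((b.-1) ^ e)%:Z])%Z.
Proof.
move=> e_gt0 b_gt1 _ happy_mod a.
have cop_bM : coprime b (b.-1 ^ e).
  by rewrite coprimeXr // -{1}(prednK (ltnW b_gt1)) coprimeSn.
have M_gt0 : 0 < b.-1 ^ e by rewrite expn_gt0 -subn1 subn_gt0 b_gt1.
have [c c_a] := exists_nat_residue a M_gt0.
have happy_mod_nat c' : exists h, happy e b h /\ h = c' %[mod b.-1].
  by have [h [? /eqz_mod_nat ?]] := happy_mod (Posz c'); exists h.
have [h [happy_h /eqz_mod_nat h_c]] :=
  happy_residues_lift e_gt0 b_gt1 (dvdn_exp e_gt0 (dvdnn _)) cop_bM happy_mod_nat c.
by exists h; split; rewrite // h_c.
Qed.
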